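(* Let $m\ge3$ and $\alpha\in[0,1]$. Every randomized social choice rule on $m$ candidates which, on every profile, places positive probability only on candidates $a$ whose integral domination graph $G(a)$ admits a perfect matching or which have $\mathrm{plu}(a)>0$, has distortion at least $2+\alpha-2/(m-2)$ on $\alpha$-decisive metric spaces.
   Context: An election: voters $V=\{1,\dots,n\}$, a fixed finite set $C$ of $m$ candidates, a profile $\sigma$ of linear orders over $C$; $a\succeq_i c$ means $a=c$ or $i$ ranks $a$ above $c$; $\mathrm{top}(i)$ is $i$'s first choice; $\mathrm{plu}(a)=|\{i:\mathrm{top}(i)=a\}|$. The integral domination graph $G(a)$ is the bipartite graph with both sides copies of $V$ and edge $(i,j)$ iff $a\succeq_i\mathrm{top}(j)$ (these are exactly the candidates that the rule \textsc{PluralityMatching} may return). A distance function $d$ on $V\cup C$ is nonnegative, symmetric and satisfies the triangle inequality (co-location allowed); consistent with $\sigma$ if $d(i,c)\le d(i,c')$ whenever $i$ ranks $c$ above $c'$; $\alpha$-decisive if $d(i,\mathrm{top}(i))\le\alpha\,d(i,c)$ for all $i$ and $c\ne\mathrm{top}(i)$. $\mathrm{SC}(c)=\sum_i d(i,c)$. The distortion of a randomized rule on $\alpha$-decisive spaces is $\sup_\sigma\sup_d\mathbb{E}[\mathrm{SC}(f(\sigma))]/\min_c\mathrm{SC}(c)$ over $\alpha$-decisive consistent $d$. *)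

From mathcomp Require Import all_boot all_order all_algebra.
From mathcomp Require Import fingroup perm reals.
Set Implicit Arguments. Unset Strict Implicit. Unset Printing Implicit Defensive.
Import Order.TTheory GRing.Theory Num.Theory.
Local Open Scope ring_scope.

(* A profile assigns to each voter i a permutation (sigma i) of 'I_m, where
   (sigma i c) is the rank position of candidate c in voter i's linear order
   (position 0 = first choice). *)
Definition profile (n m : nat) := {ffun 'I_n -> {perm 'I_m}}.

Definition ranks_above n m (s : profile n m) (i : 'I_n) (a c : 'I_m) : bool :=
  (s i a < s i c)%N.

Definition is_top n m (s : profile n m) (i : 'I_n) (c : 'I_m) : bool :=
  (nat_of_ord (s i c) == 0)%N.

Definition weakly_pref n m (s : profile n m) i (a c : 'I_m) : bool :=
  (a == c) || ranks_above s i a c.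

Definition plu n m (s : profile n m) (a : 'I_m) : nat :=
  #|[set i | is_top s i a]|.

Definition dom_edge n m (s : profile n m) (a : 'I_m) (i j : 'I_n) : bool :=
  [exists c, is_top s j c && weakly_pref s i a c].

(* G(a) (bipartite, both sides copies of V) admits a perfect matching *)
Definition has_perfect_matching n m (s : profile n m) (a : 'I_m) : Prop :=
  exists pi : {perm 'I_n}, forall i, dom_edge s a i (pi i).

Definition rand_rule (R : realType) (m : nat) :=
  forall n : nat, profile n m -> {ffun 'I_m -> R}.

Definition is_distribution (R : realType) m (p : {ffun 'I_m -> R}) : Prop :=
  (forall c, 0 <= p c) /\ \sum_(c < m) p c = 1.

(* Distance function on V ∪ C (co-location allowed). *)
Definition point n m := ('I_n + 'I_m)%type.

Definition is_distance (R : realType) n m (d : point n m -> point n m -> R)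
  : Prop :=
  [/\ forall x y, 0 <= d x y,
      forall x, d x x = 0,
      forall x y, d x y = d y x &
      forall x y z, d x z <= d x y + d y z].

Definition consistent (R : realType) n m (s : profile n m)
  (d : point n m -> point n m -> R) : Prop :=
  forall i c c', ranks_above s i c c' -> d (inl i) (inr c) <= d (inl i) (inr c').

Definition decisive (R : realType) n m (alpha : R) (s : profile n m)
  (d : point n m -> point n m -> R) : Prop :=
  forall i t c, is_top s i t -> c != t ->
    d (inl i) (inr t) <= alpha * d (inl i) (inr c).

Definition SC (R : realType) n m (d : point n m -> point n m -> R) (c : 'I_m) : R :=
  \sum_(i < n) d (inl i) (inr c).

Definition expected_SC (R : realType) n m (p : {ffun 'I_m -> R})
  (d : point n m -> point n m -> R) : R :=
  \sum_(c < m) p c * SC d c.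

Definition distortion_at_least (R : realType) m (f : rand_rule R m)
  (alpha L : R) : Prop :=
  forall r : R, r < L ->
    exists n (s : profile n m) (d : point n m -> point n m -> R),
      [/\ is_distance d, consistent s d, decisive alpha s d &
          exists c, (forall c', SC d c <= SC d c') /\
                    r * SC d c < expected_SC (f n s) d].

(* Write m = p + 3 and K = m - 2.  Let K "top" candidates each be the first
   choice of g voters who rank a further candidate, the hub, second, and add one
   voter whose first choice is a candidate [far] and who ranks the hub last.
   Nobody ranks the hub first, and the extra voter has no partner in G(hub), so
   the rule never selects the hub.  Put the hub at the centre of a star, each top
   candidate at distance 1 + alpha on its own branch with its voters at distance
   alpha from it, and [far] far away: this space is consistent and
   alpha-decisive, SC(hub) = 2 + K g, and every other candidate costs at least
   2 + ((2 + alpha) K - 2) g.  Letting g grow, the ratio tends to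
   2 + alpha - 2 / K. *)

From mathcomp Require Import all_boot all_order all_algebra.
From mathcomp Require Import fingroup perm reals.
From mathcomp Require Import lra zify.
Set Implicit Arguments. Unset Strict Implicit. Unset Printing Implicit Defensive.
Import Order.TTheory GRing.Theory Num.Theory.
Local Open Scope ring_scope.

Section Pseudometric.
Variable R : realType.

Definition pseudometric (T : Type) (d : T -> T -> R) : Prop :=
  [/\ forall x y, 0 <= d x y,
      forall x, d x x = 0,
      forall x y, d x y = d y x &
      forall x y z, d x z <= d x y + d y z].

Lemma pseudometric_distance (T : Type) n m (d : T -> T -> R)
    (site : point n m -> T) :
  pseudometric d -> is_distance (fun x y => d (site x) (site y)).
Proof. by case; split. Qed.

Definition star_dist (B : eqType) (x y : B * R) : R :=
  if x.1 == y.1 then `|x.2 - y.2| else `|x.2| + `|y.2|.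

Lemma star_dist_bounds (B : eqType) (x y : B * R) :
  `| `|x.2| - `|y.2| | <= star_dist x y <= `|x.2| + `|y.2|.
Proof.
rewrite /star_dist; case: ifP => _.
  by rewrite ler_dist_dist ler_normB.
by rewrite lexx andbT; have := ler_normB `|x.2| `|y.2|; rewrite !normr_id.
Qed.

Lemma star_distC (B : eqType) (x y : B * R) : star_dist x y = star_dist y x.
Proof. by rewrite /star_dist eq_sym distrC [`|y.2| + _]addrC. Qed.

Lemma star_dist_pseudometric (B : eqType) : pseudometric (@star_dist B).
Proof.
split; [|by move=> x; rewrite /star_dist eqxx subrr normr0|exact: star_distC|].
  by move=> x y; have /andP[+ _] := star_dist_bounds x y; apply: le_trans.
have off_branch x y z : x.1 != y.1 -> star_dist x z <= star_dist x y + star_dist y z.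
  move=> nxy; have /andP[_ xz] := star_dist_bounds x z.
  have /andP[/ler_normlP[yz _] _] := star_dist_bounds y z.
  rewrite {2}/star_dist (negPf nxy); lra.
move=> x y z; case: (eqVneq x.1 y.1) => [exy|]; last exact: off_branch.
case: (eqVneq y.1 z.1) => [eyz|nyz].
  by rewrite /star_dist exy eyz !eqxx ler_distD.
rewrite star_distC addrC !(star_distC y) (star_distC x).
by apply: off_branch; rewrite eq_sym.
Qed.

Definition extend_dist (T : Type) (d : T -> T -> R) (c : T -> R)
    (x y : option T) : R :=
  match x, y with
  | Some x, Some y => d x y
  | Some x, None | None, Some x => c x
  | None, None => 0
  end.

Lemma extend_dist_pseudometric (T : Type) (d : T -> T -> R) (c : T -> R) :
  pseudometric d ->
  (forall x y, c x <= d x y + c y) -> (forall x y, d x y <= c x + c y) ->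
  pseudometric (extend_dist d c).
Proof.
case=> d0 dxx dC dtri c_lip d_le.
have c0 x : 0 <= c x by have := d_le x x; rewrite dxx; lra.
split; [by case=> [x|] [y|] /= | by case | by case=> [x|] [y|] /= |].
case=> [x|] [y|] [z|] //=; rewrite ?addr0 ?add0r ?c0 ?lexx ?addr_ge0 //.
by rewrite dC addrC c_lip.
Qed.

Lemma extend_pendant_pseudometric (T : Type) (d : T -> T -> R) (z : T) (l : R) :
  pseudometric d -> 0 <= l -> pseudometric (extend_dist d (fun x => l + d z x)).
Proof.
move=> dP l0; case: (dP) => d0 _ dC dtri.
apply: extend_dist_pseudometric => // x y.
  by have := dtri z y x; rewrite (dC y x); lra.
by have := dtri x z y; rewrite (dC x z); have := d0 z x; lra.
Qed.

Lemma extend_star_pseudometric (B : eqType) (r : R) :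
  pseudometric (extend_dist (@star_dist B) (fun x => Num.max r `|x.2|)).
Proof.
have [d0 _ _ _] := star_dist_pseudometric B.
apply: extend_dist_pseudometric; first exact: star_dist_pseudometric.
all: move=> x y; have /andP[/ler_normlP[? ?] ?] := star_dist_bounds x y.
all: have := le_max r r `|y.2|; have := le_max `|y.2| r `|y.2|.
all: have := le_max `|x.2| r `|x.2|; rewrite !lexx !orbT => ? ? ?.
  by rewrite ge_max; apply/andP; split; have := d0 x y; lra.
lra.
Qed.
End Pseudometric.

Lemma sum_modn (V : nmodType) (k g : nat) (F : nat -> V) :
  \sum_(i < k * g) F (i %% k)%N = (\sum_(j < k) F j) *+ g.
Proof.
rewrite -(big_mkord xpredT (fun i => F (i %% k)%N)) -(big_mkord xpredT F).
elim: g => [|g IHg]; first by rewrite muln0 big_geq // mulr0n.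
rewrite mulnSr (@big_cat_nat _ _ _ (k * g)%N) ?leq_addr //= IHg mulrSr.
congr (_ + _); rewrite -{1}(add0n (k * g)%N) big_addn addKn.
by apply: eq_big_nat => i /andP[_ lt_ik]; rewrite addnC mulnC modnMDl modn_small.
Qed.

Lemma exists_nat_affine_lt (R : archiRealFieldType) (a b c d : R) :
  b < d -> exists g : nat, (0 < g)%N /\ a + b * g%:R < c + d * g%:R.
Proof.
move=> lt_bd; have db0 : 0 < d - b by rewrite subr_gt0.
set x := `|a - c| / (d - b).
have x0 : 0 <= x by rewrite divr_ge0 // ltW.
exists (Num.Def.archi_bound x).+1; split => //.
have /ltW lt_xg := archi_boundP x0.
have : x < (Num.Def.archi_bound x).+1%:R by apply: le_lt_trans lt_xg _; rewrite ltr_nat.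
rewrite ltr_pdivrMr // => lt_ac; have := ler_norm (a - c); lra.
Qed.

Section Voting.
Variables (R : realType) (n m : nat).
Implicit Types (s : profile n m) (d : point n m -> point n m -> R).

Lemma consistent_of_rank_cost s d (cost : 'I_n -> nat -> R) :
  (forall i, {homo cost i : k l / (k < l)%N >-> k <= l}) ->
  (forall i c, d (inl i) (inr c) = cost i (s i c)) -> consistent s d.
Proof. by move=> cost_mono dE i c c' lt_cc'; rewrite !dE cost_mono. Qed.

Lemma decisive_of_rank_cost (alpha : R) s d (cost : 'I_n -> nat -> R) :
  (forall i k, (0 < k)%N -> cost i 0 <= alpha * cost i k) ->
  (forall i c, d (inl i) (inr c) = cost i (s i c)) -> decisive alpha s d.
Proof.
move=> cost_top dE i t c /eqP top_t ct; rewrite !dE top_t cost_top // lt0n.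
apply: contra ct => /eqP c0; apply/eqP/(@perm_inj _ (s i))/val_inj.
by rewrite /= c0 top_t.
Qed.

Lemma mean_gt_of_null (P : {ffun 'I_m -> R}) (X : 'I_m -> R) (a : 'I_m) (y : R) :
  is_distribution P -> P a = 0 -> (forall c, c != a -> y < X c) ->
  y < \sum_c P c * X c.
Proof.
move=> [P0 P1] Pa yX.
have [c0 Pc0|P_le0] := pickP (fun c => 0 < P c); last first.
  have : \sum_c P c = 0.
    by apply: big1 => c _; apply/eqP; rewrite eq_le P0 andbT leNgt P_le0.
  by rewrite P1 => /eqP; rewrite oner_eq0.
have c0a : c0 != a by apply: contraTneq Pc0 => ->; rewrite Pa ltxx.
rewrite -subr_gt0 -[y]mul1r -P1 mulr_suml -sumrB.
rewrite (bigD1 c0) //= ltr_pwDl ?sumr_ge0 // => [|c _].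
  by rewrite -mulrBr mulr_gt0 // subr_gt0 yX.
rewrite -mulrBr; case: (eqVneq c a) => [->|ca]; first by rewrite Pa mul0r.
by rewrite mulr_ge0 // subr_ge0 ltW // yX.
Qed.

End Voting.

Section HardInstance.
Variables (p g : nat).

Local Notation m := p.+3.
Local Notation n := (p.+1 * g).+1.

Definition hub : 'I_m := inord p.+1.
Definition far : 'I_m := ord_max.
Definition top_of (v : nat) : 'I_m := inord (v %% p.+1).

Lemma val_hub : val hub = p.+1. Proof. by rewrite /= inordK. Qed.

Lemma val_top_of v : val (top_of v) = (v %% p.+1)%N.
Proof. by rewrite /= inordK // (ltn_trans (ltn_pmod _ _)). Qed.

Lemma top_of_neq_hub v : top_of v != hub.
Proof. by rewrite -val_eqE val_top_of val_hub; have := @ltn_pmod v p.+1 isT; lia. Qed.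

Lemma top_of_neq_far v : top_of v != far.
Proof. by rewrite -val_eqE val_top_of /=; have := @ltn_pmod v p.+1 isT; lia. Qed.

Lemma hub_neq_far : hub != far.
Proof. by rewrite -val_eqE val_hub /=; lia. Qed.

Definition ballot (v : nat) : {perm 'I_m} :=
  if v is v'.+1 then (tperm ord0 (top_of v') * tperm (inord 1) hub)%g
  else (tperm hub far * tperm ord0 hub)%g.

Lemma ballotS_top v : ballot v.+1 (top_of v) = ord0.
Proof. by rewrite permM tpermR tpermD // -val_eqE /= ?val_hub // inordK. Qed.

Lemma ballotS_hub v : val (ballot v.+1 hub) = 1%N.
Proof.
rewrite permM [tperm ord0 _ hub]tpermD ?top_of_neq_hub ?tpermR /= ?inordK //.
by rewrite -val_eqE val_hub.
Qed.

Lemma ballotS_far v : ballot v.+1 far = far.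
Proof.
rewrite permM !tpermD // ?top_of_neq_far ?hub_neq_far //.
all: by rewrite -val_eqE /= ?inordK.
Qed.

Lemma ballot0_far : ballot 0 far = ord0.
Proof. by rewrite permM !tpermR. Qed.

Lemma ballot0_hub : ballot 0 hub = far.
Proof. by rewrite permM tpermL tpermD // ?hub_neq_far // -val_eqE /= val_hub. Qed.

Definition hard_profile : profile n m := [ffun i : 'I_n => ballot i].

Lemma hub_not_top (i : 'I_n) : ~~ is_top hard_profile i hub.
Proof.
by rewrite /is_top ffunE; case: i => [[|v] ?]; rewrite ?ballot0_hub ?ballotS_hub.
Qed.

Lemma plu_hub : plu hard_profile hub = 0%N.
Proof.
apply/eqP; rewrite cards_eq0; apply/eqP/setP => i.
by rewrite inE in_set0 (negPf (hub_not_top i)).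
Qed.

Lemma hub_no_perfect_matching : ~ has_perfect_matching hard_profile hub.
Proof.
case=> pi /(_ ord0) /existsP[c /andP[top_c pref_c]].
case/orP: pref_c => [/eqP hub_c|].
  by move: top_c; rewrite -hub_c (negPf (hub_not_top _)).
by rewrite /ranks_above ffunE ballot0_hub ltnNge -ltnS ltn_ord.
Qed.

Section Distances.
Variables (R : realType) (alpha : R).
Hypotheses (alpha_ge0 : 0 <= alpha) (alpha_le1 : alpha <= 1).

(* [lra] and [nra] ignore section hypotheses, hence the local copies [a0], [a1]. *)

Definition inner_dist : option ('I_m * R) -> option ('I_m * R) -> R :=
  extend_dist (@star_dist R 'I_m) (fun x => Num.max 2 `|x.2|).

(* Star points are pairs (branch, height).  [Some None] is voter 0, at distance
   2 from every star point of height at most 2; [None] is [far], a pendant point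
   at distance [2 * alpha] behind voter 0. *)
Definition site (x : point n m) : option (option ('I_m * R)) :=
  match x with
  | inl i => Some (if val i is v.+1 then Some (top_of v, 1) else None)
  | inr c => if c == far then None
             else Some (Some (c, if c == hub then 0 else 1 + alpha))
  end.

Definition hard_dist (x y : point n m) : R :=
  extend_dist inner_dist (fun u => 2 * alpha + inner_dist None u) (site x) (site y).

Lemma hard_dist_distance : is_distance hard_dist.
Proof.
apply: pseudometric_distance; apply: extend_pendant_pseudometric.
  exact: extend_star_pseudometric.
by rewrite mulr_ge0.
Qed.

Definition cost (v : nat) (c : 'I_m) : R :=
  if v is v'.+1 then
    if c == top_of v' then alpha else if c == hub then 1
    else if c == far then 2 + 2 * alpha else 2 + alpha
  else if c == far then 2 * alpha else 2.

Lemma hard_dist_voter (i : 'I_n) c : hard_dist (inl i) (inr c) = cost i c.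
Proof.
have a0 := alpha_ge0; have a1 := alpha_le1.
rewrite /hard_dist /site /cost /inner_dist; case: i => [[|v] _] /=.
  case: eqVneq => _ /=; first by rewrite addr0.
  by case: ifP => _; rewrite max_l ?normr0 ?ger0_norm //; lra.
case: eqVneq => [->|nf] /=.
  rewrite ![far == _]eq_sym (negPf (top_of_neq_far v)) (negPf hub_neq_far).
  by rewrite normr1 max_l //; lra.
rewrite /star_dist /= [top_of v == c]eq_sym.
case: eqVneq => [->|nt].
  by rewrite (negPf (top_of_neq_hub v)) distrC addrC addKr ger0_norm.
by case: ifP => _; rewrite normr1 ?normr0 ?addr0 // ger0_norm //; lra.
Qed.

Definition rank_cost (v k : nat) : R :=
  if v is _.+1 then
    if k == 0%N then alpha else if k == 1%N then 1
    else if (k < p.+2)%N then 2 + alpha else 2 + 2 * alpha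
  else if k == 0%N then 2 * alpha else 2.

Lemma cost_rank v c : cost v c = rank_cost v (ballot v c).
Proof.
have rank_neq c' : c != c' -> (ballot v c : nat) != ballot v c'.
  by move=> cc'; rewrite (inj_eq (@ord_inj _)) (inj_eq perm_inj).
rewrite /cost /rank_cost; case: v rank_neq => [|v] rank_neq.
  case: eqVneq => [->|nf]; first by rewrite ballot0_far.
  by have := rank_neq _ nf; rewrite ballot0_far => /negPf ->.
case: eqVneq => [->|nt]; first by rewrite ballotS_top.
have := rank_neq _ nt; rewrite ballotS_top => /negPf ->.
case: eqVneq => [->|nh]; first by rewrite ballotS_hub.
have := rank_neq _ nh; rewrite ballotS_hub => /negPf ->.
case: eqVneq => [->|nf]; first by rewrite ballotS_far /= ltnn.
have := rank_neq _ nf; rewrite ballotS_far [nat_of_ord far]/= => ?.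
by rewrite ifT //; have := ltn_ord (ballot v.+1 c); lia.
Qed.

Lemma rank_cost_mono v : {homo rank_cost v : k l / (k < l)%N >-> k <= l}.
Proof.
have a0 := alpha_ge0; have a1 := alpha_le1.
move=> k l lt_kl; rewrite /rank_cost.
by case: v => [|_]; do !case: ifP => ?; first [lra | lia].
Qed.

Lemma rank_cost_top v k : (0 < k)%N -> rank_cost v 0 <= alpha * rank_cost v k.
Proof.
have a0 := alpha_ge0.
move=> k0; rewrite /rank_cost /=.
by case: v => [|_]; do !case: ifP => ?; first [nra | lia].
Qed.

Lemma hard_dist_rank (i : 'I_n) c :
  hard_dist (inl i) (inr c) = rank_cost i (hard_profile i c).
Proof. by rewrite hard_dist_voter cost_rank ffunE. Qed.

Lemma hard_profile_consistent : consistent hard_profile hard_dist.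
Proof. exact: consistent_of_rank_cost (fun i => rank_cost_mono i) hard_dist_rank. Qed.

Lemma hard_profile_decisive : decisive alpha hard_profile hard_dist.
Proof. exact: decisive_of_rank_cost (fun i => rank_cost_top i) hard_dist_rank. Qed.

Lemma SC_hard_dist c : SC hard_dist c = cost 0 c + \sum_(v < p.+1 * g) cost v.+1 c.
Proof.
rewrite /SC big_ord_recl hard_dist_voter; congr (_ + _).
by apply: eq_bigr => i _; rewrite hard_dist_voter.
Qed.

Lemma SC_hub : SC hard_dist hub = 2 + (p.+1 * g)%:R.
Proof.
rewrite SC_hard_dist /cost (negPf hub_neq_far).
under eq_bigr do rewrite eq_sym (negPf (top_of_neq_hub _)) eqxx.
by rewrite sumr_const card_ord.
Qed.

Lemma SC_far : SC hard_dist far = 2 * alpha + (2 + 2 * alpha) * (p.+1 * g)%:R.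
Proof.
rewrite SC_hard_dist /cost eqxx.
under eq_bigr do rewrite eq_sym (negPf (top_of_neq_far _)) eq_sym (negPf hub_neq_far).
by rewrite sumr_const card_ord mulr_natr.
Qed.

Lemma SC_top (c : 'I_m) : (c < p.+1)%N ->
  SC hard_dist c = 2 + ((2 + alpha) * p.+1%:R - 2) * g%:R.
Proof.
move=> lt_c; have c_hub : c != hub by rewrite -val_eqE val_hub neq_ltn lt_c.
have c_far : c != far by rewrite -val_eqE neq_ltn ltnW.
rewrite SC_hard_dist /cost (negPf c_far).
under eq_bigr do rewrite (negPf c_hub).
rewrite (sum_modn _ _ (fun j => if c == inord j then alpha else 2 + alpha)).
congr (_ + _); rewrite mulr_natr; congr (_ *+ _).
have c_inord (j : 'I_p.+1) : (c == inord j) = (j == Ordinal lt_c).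
  by rewrite eq_sym -val_eqE /= inordK // (ltn_trans (ltn_ord j)).
under eq_bigr do rewrite c_inord.
rewrite (bigD1 (Ordinal lt_c)) //= eqxx.
under eq_bigr => j /negPf -> do [].
rewrite sumr_const cardC1 card_ord /= -mulr_natr mulrSr; lra.
Qed.

Lemma SC_lower c : (0 < g)%N -> c != hub ->
  2 + ((2 + alpha) * p.+1%:R - 2) * g%:R <= SC hard_dist c.
Proof.
have a0 := alpha_ge0.
move=> g0 c_hub; have [->|c_far] := eqVneq c far.
  rewrite SC_far natrM; have g1 : 1 <= g%:R :> R by rewrite ler1n.
  have : 0 <= alpha * (p.+1%:R * g%:R) by rewrite !mulr_ge0.
  nra.
rewrite SC_top //; move: c_hub c_far; rewrite -!val_eqE val_hub /=.
by have := ltn_ord c; lia.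
Qed.

Lemma SC_off_hub_gt (r : R) (c0 c : 'I_m) : (0 < g)%N ->
  SC hard_dist c0 <= SC hard_dist hub ->
  r * SC hard_dist hub < 2 + ((2 + alpha) * p.+1%:R - 2) * g%:R ->
  c != hub -> r * SC hard_dist c0 < SC hard_dist c.
Proof.
have a0 := alpha_ge0.
move=> g0 c0_hub r_hub c_hub; apply: lt_le_trans (SC_lower g0 c_hub).
have [r0|r0] := lerP r 0; last by apply: le_lt_trans r_hub; rewrite ler_pM2l.
have [dist0 _ _ _] := hard_dist_distance.
have : r * SC hard_dist c0 <= 0 by rewrite mulr_le0_ge0 // sumr_ge0.
have slope0 : 0 <= (2 + alpha) * p.+1%:R - 2.
  have K1 : 1 <= p.+1%:R :> R by rewrite ler1n.
  nra.
have := mulr_ge0 slope0 (ler0n R g); lra.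
Qed.

End Distances.
End HardInstance.

Theorem theorem6 (R : realType) (m : nat) (alpha : R) (f : rand_rule R m) :
  (3 <= m)%N -> 0 <= alpha <= 1 ->
  (forall n (s : profile n m), is_distribution (f n s)) ->
  (forall n (s : profile n m) (a : 'I_m), 0 < f n s a ->
      has_perfect_matching s a \/ (0 < plu s a)%N) ->
  distortion_at_least f alpha (2 + alpha - 2 / (m - 2)%:R).
Proof.
move=> m3 /andP[a0 a1] f_distr f_supp r r_lt.
have [p def_m] : exists p, m = p.+3 by exists (m - 3)%N; lia.
subst m.
have slope_lt : r * p.+1%:R < (2 + alpha) * p.+1%:R - 2.
  have K0 : 0 < p.+1%:R :> R by rewrite ltr0n.
  by move: r_lt; rewrite -(ltr_pM2r K0) mulrBl divfK ?pnatr_eq0.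
have [g [g0 r_g]] := exists_nat_affine_lt (2 * r) 2 slope_lt.
pose d := @hard_dist p g R alpha.
exists _, (hard_profile p g), d; split.
- exact: hard_dist_distance.
- exact: hard_profile_consistent.
- exact: hard_profile_decisive.
have [c0 _ c0_min] := @arg_minP _ _ _ (hub p) xpredT (SC d) isT.
exists c0; split=> [c|]; first exact: c0_min.
have f_hub : f _ (hard_profile p g) (hub p) = 0.
  have [f0 _] := f_distr _ (hard_profile p g).
  apply/eqP; rewrite eq_le f0 andbT leNgt; apply/negP.
  by case/f_supp => [/hub_no_perfect_matching //|]; rewrite plu_hub.
apply: mean_gt_of_null f_hub _ => // c c_hub.
apply: (SC_off_hub_gt a0 a1) => //; first exact: c0_min.
by rewrite (SC_hub _ _ a0 a1) natrM; lra.
Qed.
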